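(* Let $\mathcal{N}$ be a nested set on a connected graph $\Gamma$ such that the full vertex set of $\Gamma$ is not an element of $\mathcal{N}$. Then there is a vertex $x$ of $\Gamma$ which is not contained in any element of $\mathcal{N}$.
   Context: A nested set on a finite simple graph $\Gamma$ is a collection $\mathcal{N}$ of subsets of the vertex set such that (N1) each $J\in\mathcal{N}$ induces a connected subgraph of $\Gamma$; (N2) for any $I,J\in\mathcal{N}$, either $I\subseteq J$, $J\subseteq I$, or $I\cap J=\emptyset$; (N3) for any $k\geq 2$ pairwise disjoint $J_1,\dots,J_k\in\mathcal{N}$, the induced subgraph on $J_1\cup\cdots\cup J_k$ is not connected. The graph $\Gamma$ itself is identified with its vertex set. *)

(* A finite simple graph is a finType T of vertices with a
   symmetric irreflexive adjacency relation e. *)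
From mathcomp Require Import all_boot.
Set Implicit Arguments. Unset Strict Implicit. Unset Printing Implicit Defensive.

Definition induced_rel (T : finType) (e : rel T) (S : {set T}) : rel T :=
  [rel a b | [&& e a b, a \in S & b \in S]].

Definition induces_connected (T : finType) (e : rel T) (S : {set T}) : Prop :=
  S != set0 /\ forall x y, x \in S -> y \in S -> connect (induced_rel e S) x y.

Definition graph_connected (T : finType) (e : rel T) : Prop :=
  induces_connected e [set: T].

Definition nested_set (T : finType) (e : rel T) (N : {set {set T}}) : Prop :=
  (forall J, J \in N -> induces_connected e J) /\
  (forall I J, I \in N -> J \in N ->
     [\/ I \subset J, J \subset I | [disjoint I & J]]) /\
  (forall F : {set {set T}}, F \subset N -> 2 <= #|F| ->
     (forall I J, I \in F -> J \in F -> I != J -> [disjoint I & J]) ->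
     ~ induces_connected e (\bigcup_(J in F) J)).

(* If every vertex were covered by N, the maximal members of N would cover the
   graph; by laminarity (N2) they are pairwise disjoint, so (N3) forbids there
   being two or more of them, as their union is the connected whole graph.
   Hence there is exactly one maximal member, and it is the full vertex set. *)
From mathcomp Require Import all_boot.

Set Implicit Arguments.
Unset Strict Implicit.
Unset Printing Implicit Defensive.

Section MaximalMembers.

Variables (T : finType) (N : {set {set T}}).

Definition maximal_members : {set {set T}} := [set J | maxset [pred K | K \in N] J].

Lemma maximal_members_sub : maximal_members \subset N.
Proof. by apply/subsetP => J; rewrite inE => /maxsetp. Qed.

Lemma sub_maximal_member J :
  J \in N -> exists2 K, K \in maximal_members & J \subset K.
Proof. by move=> JN; have [K maxK JK] := maxset_exists JN; exists K; rewrite ?inE. Qed.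

Lemma bigcup_maximal_members :
  \bigcup_(J in maximal_members) J = \bigcup_(J in N) J.
Proof.
apply/eqP; rewrite eqEsubset; apply/andP; split.
  apply/bigcupsP => J maxJ.
  exact/bigcup_sup/(subsetP maximal_members_sub).
apply/bigcupsP => J /sub_maximal_member[K maxK JK].
exact: subset_trans JK (bigcup_sup _ maxK).
Qed.

Lemma laminar_maximal_members_disjoint :
  (forall I J, I \in N -> J \in N ->
     [\/ I \subset J, J \subset I | [disjoint I & J]]) ->
  forall I J, I \in maximal_members -> J \in maximal_members -> I != J ->
  [disjoint I & J].
Proof.
move=> laminar I J; rewrite !inE => maxI maxJ neqIJ.
have [IJ|JI|//] := laminar I J (maxsetp maxI) (maxsetp maxJ).
  by rewrite (maxsetsup maxI (maxsetp maxJ) IJ) eqxx in neqIJ.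
by rewrite (maxsetsup maxJ (maxsetp maxI) JI) eqxx in neqIJ.
Qed.

End MaximalMembers.

Lemma nested_cover_setT (T : finType) (e : rel T) (N : {set {set T}}) :
  graph_connected e -> nested_set e N -> \bigcup_(J in N) J = [set: T] ->
  [set: T] \in N.
Proof.
move=> connected_e [_ [laminar no_disjoint_union]].
rewrite -bigcup_maximal_members => cover.
have [M_gt1|] := ltnP 1 #|maximal_members N|.
  have := no_disjoint_union _ (maximal_members_sub N) M_gt1
    (laminar_maximal_members_disjoint laminar).
  by rewrite cover.
rewrite leq_eqVlt ltnS leqn0 => /orP[/cards1P[K defM] | /eqP/cards0_eq M0].
  have := maximal_members_sub N; rewrite defM sub1set.
  by move: cover; rewrite defM big_set1 => ->.
by case: connected_e; rewrite -cover M0 big_set0 eqxx.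
Qed.

Theorem lemma5p5 (T : finType) (e : rel T)
  (e_sym : symmetric e) (e_irr : irreflexive e)
  (N : {set {set T}}) :
  graph_connected e -> nested_set e N -> [set: T] \notin N ->
  exists x : T, forall J, J \in N -> x \notin J.
Proof.
move=> connected_e nested_N setT_notin_N.
have [x /forall_inP uncovered | all_covered] :=
  pickP [pred x | [forall J in N, x \notin J]].
  by exists x.
suff cover : \bigcup_(J in N) J = [set: T].
  by rewrite (nested_cover_setT connected_e nested_N cover) in setT_notin_N.
apply/setP => x; rewrite inE; apply/bigcupP.
move: (all_covered x) => /negbT; rewrite negb_forall_in => /existsP[J].
by rewrite negbK => /andP[JN xJ]; exists J.
Qed.
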